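(* Let $q$ be a prime power, $s\ge 2$ an integer, $v=2s$, and let $V$ be a $v$-dimensional vector space over $\mathrm{GF}(q)$. Let $\mathcal{G}$ be a Desarguesian $1$-spread of $V$. Let $L$ be a $2$-dimensional subspace of $V$ not contained in any element of $\mathcal{G}$. Then the number of $4$-dimensional subspaces of $V$ containing $L$ that are scattered with respect to $\mathcal{G}$ equals \[ \lambda_{\max}=\begin{bmatrix} v-2\\ 2\end{bmatrix}_q-1-q\begin{bmatrix} 2\\ 1\end{bmatrix}_q\begin{bmatrix} v-4\\ 1\end{bmatrix}_q-\begin{bmatrix} v\\ 1\end{bmatrix}_q\Big/\begin{bmatrix} 2\\ 1\end{bmatrix}_q+\begin{bmatrix} 4\\ 1\end{bmatrix}_q\Big/\begin{bmatrix} 2\\ 1\end{bmatrix}_q . \]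
   Context: For integers $0\le m\le n$, $\begin{bmatrix} n\\ m\end{bmatrix}_q=\prod_{i=0}^{m-1}\frac{q^{n-i}-1}{q^{m-i}-1}$ is the Gaussian coefficient. A $1$-spread of $V$ is a set of $2$-dimensional subspaces of $V$ such that every $1$-dimensional subspace of $V$ lies in exactly one of them. The Desarguesian $1$-spread of $\mathrm{GF}(q^2)^s$, viewed as a $2s$-dimensional $\mathrm{GF}(q)$-vector space, is the set of all $1$-dimensional $\mathrm{GF}(q^2)$-subspaces of $\mathrm{GF}(q^2)^s$ (each being a $2$-dimensional $\mathrm{GF}(q)$-subspace); a $1$-spread of $V$ is Desarguesian if it is the image of this spread under some $\mathrm{GF}(q)$-linear isomorphism $\mathrm{GF}(q^2)^s\to V$. A subspace $B\le V$ is scattered with respect to $\mathcal{G}$ if $B$ contains no $2$-dimensional subspace contained in an element of $\mathcal{G}$ (equivalently, $\dim(B\cap S)\le 1$ for all $S\in\mathcal{G}$). *)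

From HB Require Import structures.
From mathcomp Require Import all_boot all_order all_algebra all_field.
Set Implicit Arguments. Unset Strict Implicit. Unset Printing Implicit Defensive.
Import GRing.Theory.
Local Open Scope ring_scope.

Import VectorInternalTheory.
HB.instance Definition _ (F : finFieldType) (vT : vectType F) :=
  [Countable of {vspace vT} by <:].
HB.instance Definition _ (F : finFieldType) (vT : vectType F) :=
  [Finite of {vspace vT} by <:].

Definition gauss (q n m : nat) : rat :=
  \prod_(i < m) (((q ^ (n - i))%:R - 1) / ((q ^ (m - i))%:R - 1)).

Definition is_spread1 (F : fieldType) (vT : vectType F) (G : pred {vspace vT}) :=
  (forall S, G S -> \dim S = 2%N) /\
  (forall P : {vspace vT}, \dim P = 1%N ->
     exists S, [/\ G S, (P <= S)%VS & forall S', G S' -> (P <= S')%VS -> S' = S]).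

(* F-linear isomorphisms GF(q^2)^s -> V, where K is the quadratic extension of F
   and F acts on 'rV[K]_s through the embedding a |-> a%:A *)
Definition Flin_iso (F : fieldType) (K : fieldExtType F) (s : nat) (vT : vectType F)
    (f : 'rV[K]_s -> vT) :=
  (forall (a : F) (x y : 'rV[K]_s), f ((a%:A : K) *: x + y) = a *: f x + f y)
  /\ bijective f.

(* The Desarguesian 1-spread: image under some F-linear isomorphism of the set of
   1-dim K-subspaces of K^s *)
Definition desarguesian (F : fieldType) (K : fieldExtType F) (s : nat) (vT : vectType F)
    (G : pred {vspace vT}) :=
  exists f : 'rV[K]_s -> vT, Flin_iso f /\
    forall S : {vspace vT},
      G S <-> exists2 x : 'rV[K]_s, x != 0 &
                forall w : vT, w \in S <-> exists c : K, w = f (c *: x).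

Definition scattered (F : finFieldType) (vT : vectType F) (G : pred {vspace vT})
    (B : {vspace vT}) : bool :=
  [forall S : {vspace vT}, G S ==> (\dim (B :&: S) <= 1)%N].

(* Count the non-scattered 4-spaces through L by double counting the pairs
   (U, S) with S a spread element contained in U.  A spread element disjoint
   from L lies in exactly one such U, namely L + S; each of the q + 1 spread
   elements meeting L meets it in a point and lies in every 4-space through
   the 3-space L + S.  On the other side, a Desarguesian spread is closed
   under spans of two of its elements, so the span M of two spread elements
   meeting L is the only 4-space through L containing more than one spread
   element, and it contains q^2 + 1 of them. *)

From HB Require Import structures.
From mathcomp Require Import all_boot all_order all_algebra all_field.
From mathcomp Require Import ring zify.
Import GRing.Theory Num.Theory.
Import VectorInternalTheory.
Set Implicit Arguments.
Unset Strict Implicit.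
Unset Printing Implicit Defensive.
Local Open Scope ring_scope.

Lemma card_predI_sum {A : finType} (P : {pred A}) (b : pred A) :
  #|[pred a in P | b a]| = (\sum_(a in P) b a)%N.
Proof. by rewrite -sum1_card big_mkcondr; apply: eq_bigr => a _; case: (b a). Qed.

Lemma double_counting {A B : finType} (P : {pred A}) (Q : {pred B})
    (R : A -> B -> bool) :
  (\sum_(a in P) #|[pred b in Q | R a b]|
   = \sum_(b in Q) #|[pred a in P | R a b]|)%N.
Proof.
under eq_bigr do rewrite card_predI_sum.
under [RHS]eq_bigr do rewrite card_predI_sum.
exact: exchange_big.
Qed.

Lemma gauss1E q n : gauss q n 1 = (q%:R ^+ n - 1) / (q%:R - 1).
Proof. by rewrite /gauss big_ord1 !subn0 !natrX expr1. Qed.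

Lemma gauss2E q n : q != 1%N ->
  gauss q n 2 = gauss q n 1 * gauss q n.-1 1 / gauss q 2 1.
Proof.
move=> q_neq1; rewrite /gauss !big_ord_recr !big_ord0 /= !subn0 subn1 !natrX.
have q1 : q%:R - 1 != 0 :> rat by rewrite subr_eq0 pnatr_eq1.
have q21 : q%:R ^+ 2 - 1 != 0 :> rat.
  by rewrite subr_eq0 -natrX pnatr_eq1 -{2}(exp1n 2) eqn_exp2r.
by field; rewrite q1 q21.
Qed.

Lemma gauss_succ1 q n : q != 1%N -> gauss q n.+1 1 = 1 + q%:R * gauss q n 1.
Proof.
move=> q_neq1; have q1 : q%:R - 1 != 0 :> rat by rewrite subr_eq0 pnatr_eq1.
by rewrite !gauss1E exprS; field.
Qed.

Lemma gauss21E q : q != 1%N -> gauss q 2 1 = q%:R + 1.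
Proof.
move=> q_neq1; have q1 : q%:R - 1 != 0 :> rat by rewrite subr_eq0 pnatr_eq1.
by rewrite gauss1E; field.
Qed.

Lemma natr_expB (q a b : nat) : (0 < q)%N -> (b <= a)%N ->
  (q ^ a - q ^ b)%:R = q%:R ^+ a - q%:R ^+ b :> rat.
Proof. by move=> q_gt0 le_ba; rewrite natrB ?leq_pexp2l // !natrX. Qed.

Lemma natr_quot_expB1 (q a b N : nat) : (1 < q)%N -> (0 < a)%N ->
  (N * (q ^ a - 1) = q ^ b - 1)%N -> N%:R = (q%:R ^+ b - 1) / (q%:R ^+ a - 1) :> rat.
Proof.
move=> q_gt1 a_gt0 /(congr1 (fun n => n%:R : rat)).
rewrite natrM !natrB ?expn_gt0 ?(ltnW q_gt1) // !natrX => E.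
have den_neq0 : q%:R ^+ a - 1 != 0 :> rat.
  by rewrite subr_eq0 -natrX pnatr_eq1 -[1%N](expn0 q) eqn_exp2l // -lt0n.
by rewrite -E mulfK.
Qed.

Section FiniteVectorSpace.
Variables (F : finFieldType) (vT : vectType F).
Local Notation q := #|F|.
Local Notation fvT := (finvect_type vT).
Implicit Types (U V W A : {vspace vT}).

(* [{vspace vT}] and [{vspace fvT}] are not convertible, so [card_vspace]
   is applied to the copy of [V] in [fvT] with the same matrix. *)
Lemma card_vspace_vect V : #|[pred x : fvT | (x : vT) \in V]| = (q ^ \dim V)%N.
Proof.
pose W : {vspace fvT} := @mx2vs F fvT _ (vs2mx V).
have memW (x : fvT) : (x \in W) = ((x : vT) \in V).
  by rewrite /in_mem /= /pred_of_vspace /vline !mx2vsK.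
have -> : \dim V = \dim W by rewrite /dimv /W mx2vsK.
by rewrite -card_vspace; apply: eq_card => x; rewrite inE memW.
Qed.

Lemma card_vspace_nonzero V :
  #|[pred x : fvT | ((x : vT) \in V) && ((x : vT) != 0)]| = (q ^ \dim V - 1)%N.
Proof.
rewrite -card_vspace_vect [in RHS](cardD1 (0 : fvT)) inE mem0v add1n subn1 /=.
by apply: eq_card => x; rewrite !inE andbC.
Qed.

Lemma card_vspace_diff W V : (W <= V)%VS ->
  #|[pred x : fvT | ((x : vT) \in V) && ((x : vT) \notin W)]|
  = (q ^ \dim V - q ^ \dim W)%N.
Proof.
move=> sWV; rewrite -!card_vspace_vect.
rewrite -(cardID [pred x : fvT | (x : vT) \in W] [pred x : fvT | (x : vT) \in V]).
have -> : #|[predI [pred x : fvT | (x : vT) \in V] & [pred x : fvT | (x : vT) \in W]]|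
        = #|[pred x : fvT | (x : vT) \in W]|.
  by apply: eq_card => x; rewrite !inE andb_idl // => /(subvP sWV).
by rewrite addKn; apply: eq_card => x; rewrite !inE andbC.
Qed.

Lemma dim_addv_line W (x : vT) : x \notin W -> \dim (W + <[x]>) = (\dim W).+1.
Proof.
move=> xNW; have x_neq0 : x != 0 by apply: contraNneq xNW => ->; rewrite mem0v.
rewrite dimv_disjoint_sum ?dim_vline ?x_neq0 ?addn1 //.
apply/eqP; rewrite -subv0; apply/subvP => y /memv_capP[yW /vlineP[k def_y]].
rewrite memv0 def_y scaler_eq0 in yW *; apply/orP; left.
by apply: contraNT xNW => k_neq0; rewrite -[x](scalerK k_neq0) memvZ.
Qed.

Definition vspaces_between W A k : pred {vspace vT} :=
  [pred U | [&& (W <= U)%VS, (U <= A)%VS & \dim U == k]].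

(* Each vector of [A] outside [W] spans, together with [W], exactly one
   subspace of [vspaces_between W A (\dim W).+1]. *)
Lemma card_vspaces_between_succ W A : (W <= A)%VS ->
  (#|vspaces_between W A (\dim W).+1| * (q ^ (\dim W).+1 - q ^ \dim W)
   = q ^ \dim A - q ^ \dim W)%N.
Proof.
move=> sWA; rewrite -sum_nat_const.
pose AW := [pred x : fvT | ((x : vT) \in A) && ((x : vT) \notin W)].
transitivity (\sum_(U in vspaces_between W A (\dim W).+1)
                #|[pred x in AW | (x : vT) \in U]|)%N.
  apply: eq_bigr => U /and3P[sWU sUA /eqP <-]; rewrite -card_vspace_diff //.
  apply: eq_card => x; rewrite !inE andbC.
  by case: (boolP (_ \in U)) => xU; rewrite ?andbF // (subvP sUA _ xU).
rewrite double_counting -card_vspace_diff // -sum1_card.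
apply: eq_bigr => x; rewrite inE => /andP[xA xNW].
apply: (@eq_card1 _ (W + <[x : vT]>)%VS) => U; rewrite !inE.
apply/idP/eqP => [/andP[/and3P[sWU sUA /eqP dimU] xU] | ->].
  apply/eqP; rewrite eq_sym eqEdim subv_add sWU -memvE xU dimU.
  by rewrite dim_addv_line ?leqnn.
by rewrite addvSl subv_add sWA -memvE xA dim_addv_line // eqxx memvE addvSr.
Qed.

Lemma card_vspaces_between_succ_gauss W A : (W <= A)%VS ->
  #|vspaces_between W A (\dim W).+1|%:R = gauss q (\dim A - \dim W) 1.
Proof.
move=> sWA; have := card_vspaces_between_succ sWA.
have q_gt0 : (0 < q)%N by rewrite ltnW ?card_finNzRing_gt1.
have [d ->] : exists d, \dim A = (d + \dim W)%N.
  by exists (\dim A - \dim W)%N; rewrite subnK ?dimvS.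
rewrite addnK gauss1E; set w := \dim W; set N := #|_|.
move/(congr1 (fun n => n%:R : rat)).
rewrite natrM !natr_expB ?leq_addl // exprS exprD => E.
have r_neq0 : q%:R != 0 :> rat by rewrite pnatr_eq0 -lt0n.
have r_neq1 : q%:R - 1 != 0 :> rat.
  by rewrite subr_eq0 pnatr_eq1 gtn_eqF ?card_finNzRing_gt1.
have den_neq0 : q%:R * q%:R ^+ w - q%:R ^+ w != 0 :> rat.
  by rewrite -{2}[_ ^+ w]mul1r -mulrBl mulf_neq0 ?expf_neq0.
rewrite -[N%:R](mulfK den_neq0) E.
by field; rewrite r_neq1 den_neq0.
Qed.

Lemma card_vspaces_between_succ2_gauss W A : (W <= A)%VS ->
  #|vspaces_between W A (\dim W).+2|%:R = gauss q (\dim A - \dim W) 2.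
Proof.
move=> sWA; set w := \dim W; set d := (\dim A - w)%N.
have := double_counting (vspaces_between W A w.+2) (vspaces_between W A w.+1)
                        (fun U X => (X <= U)%VS).
move/(congr1 (fun n => n%:R : rat)); rewrite !natr_sum.
rewrite (eq_bigr (fun _ => gauss q 2 1)) => [|U /and3P[sWU sUA /eqP dimU]]; last first.
  rewrite (_ : 2 = \dim U - w)%N; last by rewrite dimU -[w.+2]addn2 addKn.
  rewrite -card_vspaces_between_succ_gauss //.
  congr _%:R; apply: eq_card => X; rewrite !inE.
  by case: (boolP (X <= U)%VS) => sXU; rewrite ?sXU ?andbF ?andbT // (subv_trans sXU sUA).
rewrite [RHS](eq_bigr (fun _ => gauss q d.-1 1)); last first.
  move=> X /and3P[sWX sXA /eqP dimX].
  rewrite /d -subnS -dimX -card_vspaces_between_succ_gauss // dimX.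
  congr _%:R; apply: eq_card => U; rewrite !inE.
  by case: (boolP (X <= U)%VS) => sXU; rewrite ?sXU ?andbF ?andbT // (subv_trans sWX sXU).
rewrite !sumr_const -[gauss q 2 1 *+ _]mulr_natl -[gauss q d.-1 1 *+ _]mulr_natl => E.
have c2_neq0 : gauss q 2 1 != 0.
  by rewrite gauss21E ?gtn_eqF ?card_finNzRing_gt1 // natr1 pnatr_eq0.
rewrite gauss2E ?gtn_eqF ?card_finNzRing_gt1 //.
by rewrite -card_vspaces_between_succ_gauss // -E mulfK.
Qed.
End FiniteVectorSpace.

Section Spread.
Variables (F : finFieldType) (vT : vectType F) (G : pred {vspace vT}).
Hypothesis spreadG : is_spread1 G.
Local Notation q := #|F|.
Local Notation fvT := (finvect_type vT).
Implicit Types (S U A : {vspace vT}).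

Definition spread_in U := [pred S in G | (S <= U)%VS].

Definition spread_closed A := forall S, G S -> (S :&: A != 0)%VS -> (S <= A)%VS.

Lemma dim_spread S : G S -> \dim S = 2%N.
Proof. exact: spreadG.1. Qed.

Lemma spread_mem_uniq {x : vT} {S S'} :
  x != 0 -> G S -> G S' -> x \in S -> x \in S' -> S = S'.
Proof.
move=> x_neq0 GS GS' xS xS'; have dim_x : \dim <[x]> = 1%N by rewrite dim_vline x_neq0.
have [S0 [_ _ uniqS0]] := spreadG.2 _ dim_x.
by rewrite (uniqS0 S GS xS) (uniqS0 S' GS' xS').
Qed.

Lemma card_spread_mem {x : vT} : x != 0 -> #|[pred S in G | x \in S]| = 1%N.
Proof.
move=> x_neq0; have dim_x : \dim <[x]> = 1%N by rewrite dim_vline x_neq0.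
have [S [GS xS _]] := spreadG.2 _ dim_x.
apply: (@eq_card1 _ S) => S'; rewrite !inE.
apply/andP/eqP => [[GS' xS'] | ->]; last by [].
exact: spread_mem_uniq x_neq0 GS' GS xS' xS.
Qed.

Lemma spread_capv0 S S' : G S -> G S' -> S != S' -> (S :&: S' = 0)%VS.
Proof.
move=> GS GS' neqSS'; apply/eqP; rewrite -vpick0; apply: contraNT neqSS' => x_neq0.
have /memv_capP[xS xS'] := memv_pick (S :&: S').
by rewrite (spread_mem_uniq x_neq0 GS GS' xS xS').
Qed.

Lemma dim_addv_spread S S' : G S -> G S' -> S != S' -> \dim (S + S') = 4%N.
Proof.
by move=> GS GS' neqSS'; rewrite dimv_disjoint_sum ?spread_capv0 // !dim_spread.
Qed.

Lemma addv_spread_eq U S S' : G S -> G S' -> S != S' ->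
  (S <= U)%VS -> (S' <= U)%VS -> (\dim U <= 4)%N -> U = (S + S')%VS.
Proof.
move=> GS GS' neqSS' sSU sS'U dimU.
by apply/eqP; rewrite eq_sym eqEdim subv_add sSU sS'U dim_addv_spread.
Qed.

(* Every nonzero vector of [A] lies in exactly one spread element. *)
Lemma sum_spread_cap A :
  (\sum_(S in G) (q ^ \dim (S :&: A) - 1) = q ^ \dim A - 1)%N.
Proof.
pose A0 := [pred x : fvT | ((x : vT) \in A) && ((x : vT) != 0)].
transitivity (\sum_(S in G) #|[pred x in A0 | (x : vT) \in S]|)%N.
  apply: eq_bigr => S _; rewrite -card_vspace_nonzero.
  by apply: eq_card => x; rewrite !inE memv_cap -andbA andbC.
rewrite double_counting -card_vspace_nonzero -sum1_card.
apply: eq_bigr => x; rewrite inE => /andP[_ x_neq0].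
by rewrite -(card_spread_mem x_neq0); apply: eq_card => S; rewrite !inE.
Qed.

Lemma card_spread_in_gauss A : spread_closed A ->
  #|spread_in A|%:R = gauss q (\dim A) 1 / gauss q 2 1.
Proof.
move=> closedA; have := sum_spread_cap A.
have q_gt1 := card_finNzRing_gt1 F.
rewrite (eq_bigr (fun S => (S <= A)%VS * (q ^ 2 - 1)))%N => [|S GS]; last first.
  have [sSA | nsSA] := boolP (S <= A)%VS.
    by rewrite mul1n (capv_idPl sSA) dim_spread.
  have /eqP-> : (S :&: A == 0)%VS by apply: contraNT nsSA; apply: closedA.
  by rewrite dimv0 subnn.
rewrite -big_distrl /= -card_predI_sum => /natr_quot_expB1 -> //.
have r_neq1 : q%:R - 1 != 0 :> rat by rewrite subr_eq0 pnatr_eq1 gtn_eqF.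
have r2_neq1 : q%:R ^+ 2 - 1 != 0 :> rat.
  by rewrite subr_eq0 -natrX pnatr_eq1 -[1%N](expn0 q) eqn_exp2l.
by rewrite !gauss1E; field; rewrite r_neq1 r2_neq1.
Qed.

Lemma card_spread_meet_gauss A : scattered G A ->
  #|[pred S in G | (S :&: A != 0)%VS]|%:R = gauss q (\dim A) 1.
Proof.
move=> /forallP scatA; have := sum_spread_cap A.
have q_gt1 := card_finNzRing_gt1 F.
rewrite (eq_bigr (fun S => (S :&: A != 0)%VS * (q ^ 1 - 1)))%N => [|S GS]; last first.
  have [-> | SA_neq0] := eqVneq (S :&: A)%VS 0%VS; first by rewrite dimv0 subnn.
  have dim_le1 := implyP (scatA S) GS; rewrite capvC in dim_le1.
  by rewrite mul1n (@anti_leq (\dim _) 1) // dim_le1 lt0n dimv_eq0.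
rewrite -big_distrl /= -card_predI_sum => /natr_quot_expB1 -> //.
by rewrite gauss1E expr1.
Qed.

Lemma scatteredE U : scattered G U = (#|spread_in U| == 0%N).
Proof.
apply/forallP/eqP => [scatU | /card0_eq noS S].
  apply: eq_card0 => S; rewrite !inE; apply/negP => /andP[GS sSU].
  by have := implyP (scatU S) GS; rewrite (capv_idPr sSU) dim_spread.
apply/implyP => GS; have /negbT := noS S; rewrite !inE unfold_in GS /= => nsSU.
rewrite leqNgt; apply: contra nsSU => dim_gt1; apply/capv_idPr/eqP.
by rewrite eqEdim capvSr dim_spread.
Qed.

Lemma card_spread_gauss : #|G|%:R = gauss q (\dim {:vT}) 1 / gauss q 2 1.
Proof.
rewrite -card_spread_in_gauss => [|S _ _]; last exact: subvf.
by congr _%:R; apply: eq_card => S; rewrite !inE subvf andbT.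
Qed.
End Spread.

(* In coordinates, spread elements are the [K]-lines [f (K x)]; if [f (K z)]
   meets [f (K x1) + f (K x2)] then [z] is a [K]-combination of [x1] and [x2]. *)
Lemma desarguesian_addv_closed (F : finFieldType) (K : fieldExtType F) (s : nat)
    (vT : vectType F) (G : pred {vspace vT}) (S1 S2 : {vspace vT}) :
  desarguesian K s G -> G S1 -> G S2 -> spread_closed G (S1 + S2).
Proof.
case=> f [[f_lin [g fK _]] defG] GS1 GS2 S GS; rewrite -vpick0.
set w := vpick _ => w_neq0; have /memv_capP[wS wS12] := memv_pick (S :&: (S1 + S2)).
have fD x y : f (x + y) = f x + f y by have := f_lin 1 x y; rewrite !scale1r.
have f0 : f 0 = 0 by apply: (addrI (f 0)); rewrite -fD !addr0.
have [x1 _ defS1] := (defG S1).1 GS1.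
have [x2 _ defS2] := (defG S2).1 GS2.
have [z _ defS] := (defG S).1 GS.
have [_ /(defS1 _).1[a ->] [_ /(defS2 _).1[b ->] def_w12]] := memv_addP wS12.
have [c def_wz] := (defS w).1 wS.
have c_z : c *: z = a *: x1 + b *: x2.
  by apply: (can_inj fK); rewrite fD -def_wz; exact: def_w12.
have c_neq0 : c != 0.
  by apply: contra_neq w_neq0 => c0; rewrite def_wz c0 scale0r f0.
apply/subvP => _ /(defS _).1[d ->].
have -> : d *: z = (d / c * a) *: x1 + (d / c * b) *: x2.
  by rewrite -(scalerA (d / c) a) -(scalerA (d / c) b) -scalerDr -c_z scalerA divfK.
by rewrite fD memv_add ?(defS1 _).2 ?(defS2 _).2; eexists.
Qed.

Section ScatteredOverLine.
Variables (F : finFieldType) (K : fieldExtType F) (s : nat) (vT : vectType F).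
Variables (G : pred {vspace vT}) (L : {vspace vT}).
Hypotheses (spreadG : is_spread1 G) (desargG : desarguesian K s G).
Hypotheses (dimL : \dim L = 2%N) (L_notin_spread : forall S, G S -> ~ (L <= S)%VS).
Local Notation q := #|F|.
Local Notation T := (vspaces_between L fullv 4).
Implicit Types (S U M : {vspace vT}).

Lemma scattered_line : scattered G L.
Proof.
apply/forallP => S; apply/implyP => GS; rewrite leqNgt; apply/negP => dim_gt1.
by apply: (L_notin_spread GS); apply/capv_idPl/eqP; rewrite eqEdim capvSl dimL.
Qed.

Lemma dim_spread_cap_line S : G S -> (S :&: L != 0)%VS -> \dim (S :&: L) = 1%N.
Proof.
move=> GS SL_neq0; apply/anti_leq; rewrite lt0n dimv_eq0 SL_neq0 andbT capvC.
exact: implyP (forallP scattered_line S) GS.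
Qed.

Lemma card_spread_meet_line : #|[pred S in G | (S :&: L != 0)%VS]| = q.+1.
Proof.
apply/eqP; rewrite -(eqr_nat rat) card_spread_meet_gauss ?scattered_line // dimL.
by rewrite gauss21E ?natr1 // gtn_eqF ?card_finNzRing_gt1.
Qed.

Lemma line_sub_addv_spread S1 S2 : G S1 -> G S2 -> S1 != S2 ->
  (S1 :&: L != 0)%VS -> (S2 :&: L != 0)%VS -> (L <= S1 + S2)%VS.
Proof.
move=> GS1 GS2 neq12 S1L_neq0 S2L_neq0.
have sub12 : (S1 :&: L + S2 :&: L <= L :&: (S1 + S2))%VS.
  rewrite subv_add !subv_cap !capvSr /=.
  rewrite (subv_trans (capvSl _ _) (addvSl S1 S2)).
  by rewrite (subv_trans (capvSl _ _) (addvSr S1 S2)).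
have disj12 : ((S1 :&: L) :&: (S2 :&: L) = 0)%VS.
  apply/eqP; rewrite -subv0 -(spread_capv0 spreadG GS1 GS2 neq12).
  by rewrite capvS ?capvSl.
apply/capv_idPl/eqP; rewrite eqEdim capvSl dimL (leq_trans _ (dimvS sub12)) //.
by rewrite dimv_disjoint_sum // !dim_spread_cap_line.
Qed.

Lemma spread_meet_line_sub U S : spread_closed G U -> (L <= U)%VS ->
  G S -> (S :&: L != 0)%VS -> (S <= U)%VS.
Proof.
move=> closedU sLU GS; apply: contraTT => nsSU; apply/negPn.
by rewrite -subv0 -(eqP (contraNT (closedU S GS) nsSU)) capvS.
Qed.

Lemma exists_spread_hull_line : exists M, [/\ (L <= M)%VS, \dim M = 4%N,
  spread_closed G M, ~~ scattered G M &
  forall U, (L <= U)%VS -> \dim U = 4%N -> U != M -> (#|spread_in G U| <= 1)%N].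
Proof.
have : (1 < #|[pred S in G | (S :&: L != 0)%VS]|)%N.
  by rewrite card_spread_meet_line ltnS ltnW ?card_finNzRing_gt1.
case/card_gt1P => S1 [S2 []]; rewrite !inE !unfold_in.
move=> /andP[GS1 S1L] /andP[GS2 S2L] neq12.
exists (S1 + S2)%VS; split.
- exact: line_sub_addv_spread GS1 GS2 neq12 S1L S2L.
- by rewrite (dim_addv_spread spreadG GS1 GS2 neq12).
- exact: desarguesian_addv_closed desargG GS1 GS2.
- rewrite scatteredE // -lt0n; apply/card_gt0P; exists S1.
  by rewrite inE unfold_in GS1 addvSl.
move=> U sLU dimU; rewrite leqNgt; apply: contra.
case/card_gt1P => S [S' []]; rewrite !inE !unfold_in.
move=> /andP[GS sSU] /andP[GS' sS'U] neqSS'.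
have defU : U = (S + S')%VS.
  by apply: (addv_spread_eq spreadG GS GS' neqSS' sSU sS'U); rewrite dimU.
rewrite {}defU in sLU *.
have closedU := desarguesian_addv_closed desargG GS GS'.
apply/eqP/(addv_spread_eq spreadG GS1 GS2 neq12).
- exact: spread_meet_line_sub closedU sLU GS1 S1L.
- exact: spread_meet_line_sub closedU sLU GS2 S2L.
by rewrite (dim_addv_spread spreadG GS GS' neqSS').
Qed.

Lemma card_nonscattered_over_line :
  #|[pred U in T | ~~ scattered G U]|%:R
  = \sum_(U in T) #|spread_in G U|%:R + 1 - gauss q 4 1 / gauss q 2 1.
Proof.
have [M [sLM dimM closedM nscatM uniqM]] := exists_spread_hull_line.
have cardM : #|spread_in G M|%:R = gauss q 4 1 / gauss q 2 1.
  by rewrite (card_spread_in_gauss spreadG closedM) dimM.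
rewrite -cardM (eq_bigr (fun U => (~~ scattered G U)%:R
                   + (U == M)%:R * (#|spread_in G M|%:R - 1))) => [|U]; last first.
  rewrite inE => /and3P[sLU _ /eqP dimU].
  have [-> | neqUM] := eqVneq U M; first by rewrite (negPf nscatM) mul1r addrC subrK.
  rewrite mul0r addr0 scatteredE //; have := uniqM U sLU dimU neqUM.
  by case: #|_| => [|[]].
rewrite big_split /= -mulr_suml -!natr_sum -!card_predI_sum.
rewrite (@eq_card1 _ M [pred U in T | U == M]) => [|U]; last first.
  by rewrite !inE andbC; case: eqP => // ->; rewrite sLM subvf dimM.
by rewrite mul1r; ring.
Qed.

Lemma card_over_line_spread S : G S ->
  #|[pred U in T | (S <= U)%VS]|%:R
  = 1 + (S :&: L != 0)%VS%:R * (gauss q (\dim {:vT} - 3) 1 - 1).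
Proof.
move=> GS; have dimLS := dimv_sum_cap L S.
rewrite dimL (dim_spread spreadG GS) capvC in dimLS.
have [SL0 | SL_neq0] := eqVneq (S :&: L)%VS 0%VS; rewrite /= ?mul0r ?addr0.
  rewrite SL0 dimv0 addn0 in dimLS; rewrite (@eq_card1 _ (L + S)%VS) // => U.
  rewrite !inE subvf; apply/idP/eqP => [/andP[/andP[sLU /eqP dimU] sSU] | ->].
    by apply/eqP; rewrite eq_sym eqEdim subv_add sLU sSU dimU dimLS.
  by rewrite addvSl addvSr dimLS.
rewrite dim_spread_cap_line // in dimLS; have {}dimLS : \dim (L + S) = 3%N by lia.
rewrite mul1r addrC subrK -dimLS -card_vspaces_between_succ_gauss ?subvf //.
congr _%:R; apply: eq_card => U; rewrite !inE subv_add dimLS subvf.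
by rewrite /= -!andbA (andbC (_ == _)%N).
Qed.

Lemma sum_card_spread_in_over_line :
  \sum_(U in T) #|spread_in G U|%:R
  = #|G|%:R + gauss q 2 1 * (gauss q (\dim {:vT} - 3) 1 - 1).
Proof.
rewrite -natr_sum double_counting natr_sum.
rewrite (eq_bigr _ card_over_line_spread) big_split /= sumr_const.
rewrite -mulr_suml -natr_sum -card_predI_sum.
by rewrite (card_spread_meet_gauss spreadG scattered_line) dimL.
Qed.

Lemma card_scattered_over_line :
  (#|[set U | [&& (L <= U)%VS, \dim U == 4%N & scattered G U]]|
   + #|[pred U in T | ~~ scattered G U]| = #|T|)%N.
Proof.
rewrite -(cardID (scattered G) T); congr (_ + _)%N; apply: eq_card => U.
  by rewrite !inE subvf unfold_in /= -!andbA.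
by rewrite !inE andbC.
Qed.
End ScatteredOverLine.

Theorem lemma4 (F : finFieldType) (K : fieldExtType F) (s : nat)
  (vT : vectType F) (G : pred {vspace vT}) (L : {vspace vT}) :
  (\dim {:K} = 2)%N ->
  (2 <= s)%N ->
  (\dim {:vT} = 2 * s)%N ->
  is_spread1 G ->
  desarguesian K s G ->
  \dim L = 2%N ->
  (forall S, G S -> ~ (L <= S)%VS) ->
  let q := #|F| in
  let v := (2 * s)%N in
  (#|[set U : {vspace vT} | [&& (L <= U)%VS, \dim U == 4%N
                              & scattered G U ] ]|%:R : rat)
  = gauss q (v - 2) 2 - 1 - q%:R * gauss q 2 1 * gauss q (v - 4) 1
    - gauss q v 1 / gauss q 2 1 + gauss q 4 1 / gauss q 2 1.
Proof.
move=> _ s_ge2 dimV spreadG desargG dimL L_notin_spread q v.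
have q_neq1 : q != 1%N by rewrite gtn_eqF ?card_finNzRing_gt1.
have cardT : #|vspaces_between L fullv 4|%:R = gauss q (v - 2) 2.
  by have := card_vspaces_between_succ2_gauss (subvf L); rewrite dimL dimV.
apply: (addIr #|[pred U in vspaces_between L fullv 4 | ~~ scattered G U]|%:R).
rewrite -natrD card_scattered_over_line cardT.
rewrite (card_nonscattered_over_line spreadG desargG dimL L_notin_spread).
rewrite (sum_card_spread_in_over_line spreadG dimL L_notin_spread).
rewrite (card_spread_gauss spreadG).
have -> : (\dim {:vT} - 3 = (v - 4).+1)%N by rewrite dimV /v; lia.
by rewrite (@gauss_succ1 q (v - 4)) // dimV /v /q; ring.
Qed.
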